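(* Let $\mathcal X\subset\mathbb R^d$ be convex and compact and let $f:\mathcal X\to\mathcal X$ be any function. Consider the two-player game in which both players have strategy set $\mathcal X$ and $u_1(x,y)=-\|x-y\|_2^2$, $u_2(x,y)=-\|y-f(x)\|_2^2$. Let $\mu\in\Delta(\mathcal X\times\mathcal X)$ be an $\varepsilon$-approximate normal-form correlated equilibrium of this game, and write $\mathbb E_x$ for expectation over the $x$-marginal of $\mu$. Then for every convex function $Q:\mathcal X\to\mathbb R$ that is $1$-Lipschitz with respect to $\|\cdot\|_2$, $$\mathbb E_x\big[Q(x)-Q(f(x))\big]\le 2\sqrt{\varepsilon}.$$
   Context: $\Delta(S)$ denotes the set of finite-support probability distributions on $S$. For a game with strategy sets $\mathcal X_i$ and utilities $u_i$, an $\varepsilon$-approximate normal-form correlated equilibrium is a distribution $\mu$ over strategy profiles such that $\mathbb E_{x\sim\mu}[u_i(\phi_i(x_i),x_{-i})-u_i(x)]\le\varepsilon$ for every player $i$ and every (arbitrary) map $\phi_i:\mathcal X_i\to\mathcal X_i$. *)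

From Stdlib Require List.
From HB Require Import structures.
From mathcomp Require Import all_boot all_order all_algebra.
From mathcomp Require Import all_classical all_reals all_analysis.
Set Implicit Arguments. Unset Strict Implicit. Unset Printing Implicit Defensive.
Import Order.TTheory GRing.Theory Num.Theory.
Import numFieldTopology.Exports.
Local Open Scope ring_scope.
Local Open Scope classical_set_scope.

Definition sqnorm {R : realType} {d : nat} (v : 'rV[R]_d) : R :=
  \sum_(i < d) v ord0 i ^+ 2.
Definition norm2 {R : realType} {d : nat} (v : 'rV[R]_d) : R :=
  Num.sqrt (sqnorm v).

Definition convex_on {R : realType} {d : nat} (X : set 'rV[R]_d)
  (Q : 'rV[R]_d -> R) : Prop :=
  forall x y t, X x -> X y -> 0 <= t <= 1 ->
    Q (t *: x + (1 - t) *: y) <= t * Q x + (1 - t) * Q y.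

Definition lipschitz1_on {R : realType} {d : nat} (X : set 'rV[R]_d)
  (Q : 'rV[R]_d -> R) : Prop :=
  forall x y, X x -> X y -> `|Q x - Q y| <= norm2 (x - y).

(* A finite-support probability distribution on S, as a finite list of
   (atom, weight) pairs with nonnegative weights summing to 1. *)
Definition is_fdistr {R : realType} {S : Type} (mu : seq (S * R)) : Prop :=
  (forall p, List.In p mu -> 0 <= p.2) /\ \sum_(p <- mu) p.2 = 1.

Definition expect {R : realType} {S : Type} (mu : seq (S * R)) (g : S -> R) : R :=
  \sum_(p <- mu) p.2 * g p.1.

Definition supported_on {R : realType} {S : Type} (mu : seq (S * R)) (A : S -> Prop) :=
  forall p, List.In p mu -> A p.1.

Definition approx_nfce {R : realType} {T1 T2 : Type} (X1 : set T1) (X2 : set T2)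
  (u1 u2 : T1 -> T2 -> R) (eps : R) (mu : seq ((T1 * T2) * R)) : Prop :=
  is_fdistr mu /\ supported_on mu (fun xy => X1 xy.1 /\ X2 xy.2) /\
  (forall phi : T1 -> T1, (forall x, X1 x -> X1 (phi x)) ->
     expect mu (fun xy => u1 (phi xy.1) xy.2 - u1 xy.1 xy.2) <= eps) /\
  (forall phi : T2 -> T2, (forall y, X2 y -> X2 (phi y)) ->
     expect mu (fun xy => u2 xy.1 (phi xy.2) - u2 xy.1 xy.2) <= eps).

From HB Require Import structures.
From mathcomp Require Import all_boot all_order all_algebra.
From mathcomp Require Import all_classical all_reals all_analysis.
From mathcomp Require Import ring lra.
Import Order.TTheory GRing.Theory Num.Theory.
Import numFieldTopology.Exports.
Local Open Scope ring_scope.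
Local Open Scope classical_set_scope.

(* Let g(x) be the mean of y given x under mu. Since Q is convex, Jensen's
   inequality gives E[Q y] >= E[Q (g x)], so E[Q x - Q y] <= E|x - g x| by the
   Lipschitz bound, and <= sqrt (E |x - g x|^2) by Cauchy-Schwarz.  By the
   parallel-axis identity, E |x - g x|^2 = E |x - y|^2 - E |g x - y|^2, which is
   the gain of player 1 from the deviation x |-> g x, hence at most eps.  The
   same argument for player 2, whose utility has the same shape in the pair
   (y, f x), bounds E[Q y - Q (f x)], and the two bounds add up. *)

Section Jensen.
Context {R : realType} {d : nat} {X : set 'rV[R]_d} {Q : 'rV[R]_d -> R}.
Hypotheses (convX : convex_set X) (convQ : convex_on X Q).

Lemma convex_set_comb t a b :
  X a -> X b -> 0 <= t <= 1 -> X (t *: a + (1 - t) *: b).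
Proof.
move=> Xa Xb /andP[t0 t1].
by have := convX _ _ (Itv01 t0 t1) (mem_set Xa) (mem_set Xb); rewrite inE.
Qed.

(* [x0] is only needed as the barycenter of an empty (or zero-weight) family. *)
Lemma convex_on_jensen (I : eqType) (s : seq I) (w : I -> R) (x : I -> 'rV[R]_d) x0 :
  X x0 -> (forall i, i \in s -> 0 <= w i /\ X (x i)) ->
  exists c, [/\ X c, (\sum_(i <- s) w i) *: c = \sum_(i <- s) w i *: x i
              & (\sum_(i <- s) w i) * Q c <= \sum_(i <- s) w i * Q (x i)].
Proof.
move=> Xx0; elim: s => [|j s IH] sP.
  by exists x0; rewrite !big_nil scale0r mul0r.
have [wj0 Xxj] := sP j (mem_head j s).
have sP' : forall i, i \in s -> 0 <= w i /\ X (x i).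
  by move=> i si; apply: sP; rewrite in_cons si orbT.
have [c [Xc Wc WQc]] := IH sP'.
rewrite !big_cons.
set W := \sum_(i <- s) w i in Wc WQc *.
have W_ge0 : 0 <= W.
  by rewrite /W big_seq; apply: sumr_ge0 => i /sP'[].
have [W'_eq0|W'_neq0] := eqVneq (w j + W) 0.
  have [wj_0 W_0] : w j = 0 /\ W = 0 by split; lra.
  rewrite W_0 in Wc WQc; exists c.
  by rewrite -Wc wj_0 W_0 !scale0r !mul0r !add0r; split; rewrite ?scale0r.
have W'gt0 : 0 < w j + W by rewrite lt_neqAle eq_sym W'_neq0 addr_ge0.
set t := w j / (w j + W).
have t01 : 0 <= t <= 1 by rewrite divr_ge0 ?ler_pdivrMr ?mul1r //=; lra.
have Wt : (w j + W) * t = w j by rewrite mulrC divfK ?gt_eqF.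
have Wt' : (w j + W) * (1 - t) = W by rewrite mulrBr mulr1 Wt; ring.
clearbody t.
exists (t *: x j + (1 - t) *: c); split; first exact: convex_set_comb.
  by rewrite scalerDr !scalerA Wt Wt' Wc.
apply: le_trans (ler_wpM2l (ltW W'gt0) (convQ (x j) c t Xxj Xc t01)) _.
by rewrite mulrDr !mulrA Wt Wt'; lra.
Qed.

Lemma convex_on_cond_jensen (I : eqType) (s : seq I) (w : I -> R)
    (a x : I -> 'rV[R]_d) :
  (forall i, i \in s -> 0 <= w i /\ X (x i)) ->
  exists g, forall k, X k ->
    [/\ X (g k),
       (\sum_(i <- s | a i == k) w i) *: g k =
         \sum_(i <- s | a i == k) w i *: x i
     & (\sum_(i <- s | a i == k) w i) * Q (g k) <=
         \sum_(i <- s | a i == k) w i * Q (x i)].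
Proof.
move=> sP; pose s_ k := [seq i <- s | a i == k].
have jensen_at k : exists c, X k ->
    [/\ X c, (\sum_(i <- s_ k) w i) *: c = \sum_(i <- s_ k) w i *: x i
       & (\sum_(i <- s_ k) w i) * Q c <= \sum_(i <- s_ k) w i * Q (x i)].
  have [Xk|nXk] := pselect (X k); last by exists k => /nXk.
  have [|c cP] := convex_on_jensen _ (s_ k) w x k Xk; last by exists c.
  by move=> i; rewrite mem_filter => /andP[_ /sP].
by have [g gP] := choice jensen_at; exists g => k /gP; rewrite !big_filter.
Qed.

End Jensen.

Lemma big_partition_seq {V : nmodType} {I K : eqType} (key : I -> K)
    (s : seq I) (F : I -> V) :
  \sum_(i <- s) F i = \sum_(k <- undup (map key s)) \sum_(i <- s | key i == k) F i.
Proof.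
rewrite (exchange_big_dep predT) //= big_seq_cond [RHS]big_seq_cond.
apply: eq_bigr => i /andP[si _].
rewrite -big_filter (@eq_filter _ _ (pred1 (key i))); last by move=> k /=; rewrite eq_sym.
by rewrite filter_pred1_uniq ?undup_uniq ?big_seq1 // mem_undup map_f.
Qed.

Lemma sqr_wmean_le {R : realType} {I : eqType} (s : seq I) (w n : I -> R) :
  (forall i, i \in s -> 0 <= w i) -> \sum_(i <- s) w i = 1 ->
  (\sum_(i <- s) w i * n i) ^+ 2 <= \sum_(i <- s) w i * n i ^+ 2.
Proof.
move=> w_ge0 w1; set m := \sum_(i <- s) w i * n i.
have : 0 <= \sum_(i <- s) w i * (n i - m) ^+ 2.
  by rewrite big_seq; apply: sumr_ge0 => i /w_ge0 wi; rewrite mulr_ge0 ?sqr_ge0.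
have -> : \sum_(i <- s) w i * (n i - m) ^+ 2 =
    \sum_(i <- s) w i * n i ^+ 2 - 2 * m * \sum_(i <- s) w i * n i
    + m ^+ 2 * \sum_(i <- s) w i.
  rewrite [2 * m * _]mulr_sumr [m ^+ 2 * _]mulr_sumr -sumrB -big_split /=.
  by apply: eq_bigr => i _; ring.
by rewrite w1 -/m; lra.
Qed.

Lemma sum_sqnormB_barycenter (R : realType) (d : nat) (I : Type) (s : seq I)
    (w : I -> R) (x : I -> 'rV[R]_d) (c k : 'rV[R]_d) :
  (\sum_(i <- s) w i) *: c = \sum_(i <- s) w i *: x i ->
  \sum_(i <- s) w i * (sqnorm (k - x i) - sqnorm (c - x i)) =
  (\sum_(i <- s) w i) * sqnorm (k - c).
Proof.
move=> Wc; rewrite /sqnorm mulr_sumr.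
under eq_bigr => i _ do rewrite -sumrB mulr_sumr.
rewrite exchange_big /=; apply: eq_bigr => j _.
have Wcj : (\sum_(i <- s) w i) * c ord0 j = \sum_(i <- s) w i * x i ord0 j.
  have := congr1 (fun v : 'rV_d => v ord0 j) Wc; rewrite /= !mxE summxE => ->.
  by apply: eq_bigr => i _; rewrite mxE.
transitivity (\sum_(i <- s) (w i * (k ord0 j - c ord0 j) ^+ 2 +
    2 * (k ord0 j - c ord0 j) * (w i * c ord0 j - w i * x i ord0 j))).
  by apply: eq_bigr => i _; rewrite !mxE; ring.
rewrite big_split /= -mulr_sumr sumrB -[\sum_(i <- s) w i * c ord0 j]mulr_suml.
by rewrite Wcj subrr mulr0 addr0 -mulr_suml !mxE.
Qed.

Lemma sqnorm_ge0 (R : realType) (d : nat) (v : 'rV[R]_d) : 0 <= sqnorm v.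
Proof. by apply: sumr_ge0 => i _; apply: sqr_ge0. Qed.

Lemma convex_gap_le_sqrt_deviation {R : realType} {d : nat} {X : set 'rV[R]_d}
    {Q : 'rV[R]_d -> R} {eps : R} {I : eqType} (s : seq I) (w : I -> R)
    (a b : I -> 'rV[R]_d) :
  convex_set X -> convex_on X Q -> lipschitz1_on X Q ->
  (forall i, i \in s -> [/\ 0 <= w i, X (a i) & X (b i)]) ->
  \sum_(i <- s) w i = 1 ->
  (forall phi, (forall x, X x -> X (phi x)) ->
     \sum_(i <- s) w i * (- sqnorm (phi (a i) - b i) - - sqnorm (a i - b i)) <= eps) ->
  \sum_(i <- s) w i * (Q (a i) - Q (b i)) <= Num.sqrt eps.
Proof.
move=> convX convQ lipQ sP w1 dev.
have w_ge0 i : i \in s -> 0 <= w i by case/sP.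
have [|g gP] := convex_on_cond_jensen convX convQ _ s w a b.
  by move=> i /sP[].
pose W k := \sum_(i <- s | a i == k) w i.
have gX x : X x -> X (g x) by case/gP.
have aX k : k \in undup (map a s) -> X k.
  by rewrite mem_undup => /mapP[i /sP[_ Xai _] ->].
have sum_by_a (F : 'rV[R]_d -> R) :
    \sum_(i <- s) w i * F (a i) = \sum_(k <- undup (map a s)) W k * F k.
  rewrite (big_partition_seq a); apply: eq_bigr => k _.
  by rewrite /W mulr_suml; apply: eq_bigr => i /eqP->.
have jensen_g : \sum_(i <- s) w i * Q (g (a i)) <= \sum_(i <- s) w i * Q (b i).
  rewrite (sum_by_a (fun x => Q (g x))) [leRHS](big_partition_seq a).
  by rewrite big_seq [leRHS]big_seq; apply: ler_sum => k /aX /gP[].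
have lip_g : \sum_(i <- s) w i * (Q (a i) - Q (g (a i))) <=
             \sum_(i <- s) w i * norm2 (a i - g (a i)).
  rewrite big_seq [leRHS]big_seq; apply: ler_sum => i /sP[wi Xai _].
  apply: ler_wpM2l => //.
  exact: le_trans (ler_norm _) (lipQ _ _ Xai (gX _ Xai)).
have variance_g : \sum_(i <- s) w i * norm2 (a i - g (a i)) ^+ 2 =
    \sum_(i <- s) w i * (sqnorm (a i - b i) - sqnorm (g (a i) - b i)).
  under eq_bigr => i _ do rewrite /norm2 sqr_sqrtr ?sqnorm_ge0 //.
  rewrite (sum_by_a (fun x => sqnorm (x - g x))) (big_partition_seq a).
  apply: eq_big_seq => k /aX /gP[_ Wg _].
  rewrite (eq_bigr (fun i => w i * (sqnorm (k - b i) - sqnorm (g k - b i)))).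
    by rewrite -big_filter sum_sqnormB_barycenter // !big_filter.
  by move=> i /eqP->.
have dev_g : \sum_(i <- s) w i * (sqnorm (a i - b i) - sqnorm (g (a i) - b i)) <= eps.
  apply: le_trans _ (dev g gX).
  by under [leRHS]eq_bigr do rewrite opprK addrC.
have norm_g : \sum_(i <- s) w i * norm2 (a i - g (a i)) <= Num.sqrt eps.
  rewrite (le_trans (ler_norm _)) // -sqrtr_sqr ler_wsqrtr //.
  by rewrite (le_trans (sqr_wmean_le _ _ _ w_ge0 w1)) // variance_g.
have -> : \sum_(i <- s) w i * (Q (a i) - Q (b i)) =
    \sum_(i <- s) w i * (Q (a i) - Q (g (a i))) +
    (\sum_(i <- s) w i * Q (g (a i)) - \sum_(i <- s) w i * Q (b i)).
  by rewrite -sumrB -big_split /=; apply: eq_bigr => i _; ring.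
lra.
Qed.

Lemma In_mem (T : eqType) (s : seq T) x : x \in s -> List.In x s.
Proof. by elim: s => //= y s IH; rewrite in_cons => /orP[/eqP->|/IH]; [left|right]. Qed.

Theorem lemma3p2 (R : realType) (d : nat) (X : set 'rV[R]_d)
  (f : 'rV[R]_d -> 'rV[R]_d) (eps : R) (mu : seq (('rV[R]_d * 'rV[R]_d) * R)) :
  convex_set X -> compact X ->
  (forall x, X x -> X (f x)) ->
  approx_nfce X X (fun x y => - sqnorm (x - y)) (fun x y => - sqnorm (y - f x)) eps mu ->
  forall Q : 'rV[R]_d -> R, convex_on X Q -> lipschitz1_on X Q ->
  expect mu (fun xy => Q xy.1 - Q (f xy.1)) <= 2 * Num.sqrt eps.
Proof.
move=> convX _ fX [[w_ge0 w1] [supp [dev1 dev2]]] Q convQ lipQ.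
have muP p : p \in mu -> [/\ 0 <= p.2, X p.1.1 & X p.1.2].
  by move=> /In_mem pmu; have [X1 X2] := supp p pmu; split => //; apply: w_ge0.
have gap1 := convex_gap_le_sqrt_deviation mu (fun p => p.2) (fun p => p.1.1)
  (fun p => p.1.2) convX convQ lipQ muP w1 dev1.
have muP' p : p \in mu -> [/\ 0 <= p.2, X p.1.2 & X (f p.1.1)].
  by move=> /muP[w_p X1 X2]; split => //; apply: fX.
have gap2 := convex_gap_le_sqrt_deviation mu (fun p => p.2) (fun p => p.1.2)
  (fun p => f p.1.1) convX convQ lipQ muP' w1 dev2.
rewrite /expect (eq_bigr (fun p => p.2 * (Q p.1.1 - Q p.1.2) +
  p.2 * (Q p.1.2 - Q (f p.1.1)))) ?big_split /=; last by move=> p _; ring.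
lra.
Qed.
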